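(* Let $(X,d)$ be a separable metric space, $T\colon X\to X$ a Borel measurable map and $\mu$ a $T$-invariant Borel probability measure such that $(X,T,\mu)$ is weakly mixing. Let $(s_n)_{n\ge1}$ be a two-jumpy scale sequence. Then the proximality gauge $\psi(x,y)=\liminf_{n\to\infty} s_n\, d(T^nx,T^ny)$ satisfies either $\psi=0$ for $\mu\times\mu$-a.e. $(x,y)$, or $\psi=\infty$ for $\mu\times\mu$-a.e. $(x,y)$.
   Context: A scale sequence is a sequence $(s_n)_{n\ge1}$ of positive reals with $s_n\to\infty$; it is two-jumpy if $s_{n+1}\ge s_n$ for all large $n$ and $\liminf_n s_{2n}/s_n>1$. Weakly mixing means $T\times T$ is ergodic with respect to $\mu\times\mu$. *)

From HB Require Import structures.
From mathcomp Require Import all_boot all_order all_algebra.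
From mathcomp Require Import all_classical all_reals all_analysis.
Set Implicit Arguments. Unset Strict Implicit. Unset Printing Implicit Defensive.
Import Order.TTheory GRing.Theory Num.Theory.
Local Open Scope classical_set_scope.
Local Open Scope ring_scope.

Definition is_metric (R : realType) (X : Type) (dist : X -> X -> R) : Prop :=
  [/\ forall x y, 0 <= dist x y,
      forall x y, dist x y = 0 <-> x = y,
      forall x y, dist x y = dist y x &
      forall x y z, dist x z <= dist x y + dist y z].

Definition metric_open (R : realType) (X : Type) (dist : X -> X -> R)
  (A : set X) : Prop :=
  forall x, A x -> exists2 e : R, 0 < e & [set y | dist x y < e] `<=` A.

Definition metric_separable (R : realType) (X : Type) (dist : X -> X -> R) : Prop :=
  exists D : set X, countable D /\
    forall x (e : R), 0 < e -> exists2 y, D y & dist x y < e.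

Definition borel_for (R : realType) d (X : measurableType d)
  (dist : X -> X -> R) : Prop :=
  (@measurable d X) = <<s metric_open dist >>.

Definition measure_preserving (R : realType) d (Y : measurableType d)
  (m : set Y -> \bar R) (S : Y -> Y) : Prop :=
  measurable_fun setT S /\
  forall A, measurable A -> m (S @^-1` A) = m A.

Definition ergodic (R : realType) d (Y : measurableType d)
  (m : set Y -> \bar R) (S : Y -> Y) : Prop :=
  measure_preserving m S /\
  forall A, measurable A -> S @^-1` A = A -> (m A = 0%E \/ m A = 1%E).

Definition weakly_mixing (R : realType) d (X : measurableType d)
  (mu : set X -> \bar R) (T : X -> X) : Prop :=
  ergodic (mu \x mu)%E (fun z : X * X => (T z.1, T z.2)).

Definition scale_sequence (R : realType) (s : nat -> R) : Prop :=
  (forall n, (0 < n)%N -> 0 < s n) /\ (s n @[n --> \oo] --> +oo).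

Definition two_jumpy (R : realType) (s : nat -> R) : Prop :=
  (exists N, forall n, (N <= n)%N -> s n <= s n.+1) /\
  (1 < limn_einf (fun n => (s (2 * n)%N / s n)%:E))%E.

Definition prox_gauge (R : realType) (X : Type) (dist : X -> X -> R)
  (T : X -> X) (s : nat -> R) (x y : X) : \bar R :=
  limn_einf (fun n => (s n * dist (iter n T x) (iter n T y))%:E).

From HB Require Import structures.
From mathcomp Require Import all_boot all_order all_algebra.
From mathcomp Require Import all_classical all_reals all_analysis.
From mathcomp Require Import lra zify.
Import measurable_realfun.
Import Order.TTheory GRing.Theory Num.Theory.
Local Open Scope classical_set_scope.
Local Open Scope ring_scope.

(* Let H_r (hits_io r) be the set of points y with s_n f(S^n y) < r for infinitely
   many n, so that {psi < r} is contained in H_r, which is contained in {psi <= r}.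
   Since s is eventually nondecreasing, H_r is contained in S^-1 H_r, hence by
   ergodicity P(H_r) is 0 or 1.  If all H_(1/(i+1)) are full, psi = 0 almost
   everywhere.  Otherwise some H_r is null, and the doubling property
   lam s_m <= s_(2m) carries this over to H_(lam r): a value s_n f(S^n y) < lam r
   forces s_m f(S^m (S^k y)) < r with m = n - k for every k in a window of length
   about n/2.  A stopping-time covering of the orbit by such windows, integrated
   against the invariant measure, shows that late hits below r and the absence of
   hits below lam r in a bounded time range cannot both have small probability.
   Iterating, every H_(lam^k r) is null and psi = +oo almost everywhere.  The
   corollary is the case S = T x T and f = d on X x X, where {d < r} is measurable
   because X is separable. *)

Section limn_einf_bounds.
Context {R : realType}.
Local Open Scope ereal_scope.
Implicit Types (u : (\bar R)^nat) (l : \bar R).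

Lemma limn_einfE u : limn_einf u = ereal_sup (range (einfs u)).
Proof. by rewrite limn_einf_lim; apply/cvg_lim => //; exact: cvg_einfs_sup. Qed.

Lemma einfs_le u {n k} : (n <= k)%N -> einfs u n <= u k.
Proof. by move=> nk; apply: ereal_inf_lbound; exists k. Qed.

Lemma lt_limn_einf {u l} : l < limn_einf u -> exists N, forall n, (N <= n)%N -> l < u n.
Proof.
rewrite limn_einfE => /ereal_sup_gt[_ [N _ <-]] lN.
by exists N => n Nn; exact: lt_le_trans lN (einfs_le u Nn).
Qed.

Lemma limn_einf_ge u l N : (forall n, (N <= n)%N -> l <= u n) -> l <= limn_einf u.
Proof.
move=> ul; rewrite limn_einfE; apply: le_trans (ereal_sup_ubound _); last by exists N.
by apply: le_ereal_inf_tmp => _ [k /= Nk <-]; exact: ul.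
Qed.

Lemma limn_einf_le u l : (forall N, exists2 n, (N <= n)%N & u n < l) -> limn_einf u <= l.
Proof.
move=> ul; rewrite limn_einfE; apply: ge_ereal_sup => _ [N _ <-].
by have [n Nn /ltW] := ul N; exact: le_trans (einfs_le _ Nn).
Qed.

Lemma limn_einf_lt {u l} : limn_einf u < l -> forall N, exists2 n, (N <= n)%N & u n < l.
Proof.
move=> ul N; apply: contrapT => nio; move: ul; rewrite ltNge => /negP; apply.
apply: (@limn_einf_ge _ _ N) => n Nn; rewrite leNgt; apply/negP => unl.
by apply: nio; exists n.
Qed.

End limn_einf_bounds.

Lemma two_jumpy_doubling {R : realType} {s : nat -> R} :
  (forall n, (0 < n)%N -> 0 < s n) -> two_jumpy s ->
  exists2 lam : R, 1 < lam &
    exists N, forall m, (N <= m)%N -> lam * s m <= s (2 * m).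
Proof.
move=> s_gt0 [_ jump].
have [lam lam1 lamJ] : exists2 lam : R, 1 < lam &
    (lam%:E < limn_einf (fun n => (s (2 * n)%N / s n)%:E))%E.
  move: jump; case: limn_einf => [x| |] //=.
  - by rewrite lte_fin => x1; exists ((1 + x) / 2); rewrite ?lte_fin; lra.
  - by move=> _; exists 2; [lra | exact: ltry].
exists lam => //; have [N HN] := lt_limn_einf lamJ; exists N.+1 => m Nm.
have := HN m (ltnW Nm); rewrite lte_fin ltr_pdivlMr; last by apply: s_gt0; lia.
exact: ltW.
Qed.

(* Walk along the orbit: from a good point jump ahead by its stopping time, which
   contributes at least a quarter of visits to b; count every bad point itself. *)
Lemma stopping_time_count {Y : Type} (S : Y -> Y) (b g : pred Y) (M : nat) :
  (forall y, g y -> exists2 t, (0 < t <= M)%N &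
      (t <= 4 * \sum_(0 <= k < t) b (iter k S y))%N) ->
  forall K y, (K <= 4 * \sum_(0 <= k < K) (b (iter k S y) + ~~ g (iter k S y)) + 4 * M)%N.
Proof.
move=> stop K; elim/ltn_ind: K => K IH y.
have [gy|ngy] := boolP (g y); last first.
  case: K IH => [//|K] IH; rewrite big_nat_recl //= (negbTE ngy) /=.
  have := IH K (ltnSn K) (S y).
  under [X in (_ <= 4 * X + _)%N -> _]eq_bigr do rewrite -iterSr iterS.
  by lia.
have [t /andP[t0 tM] tb] := stop y gy.
have [Kt|tK] := ltnP K t; first by lia.
rewrite (big_cat_nat (leq0n t) tK) /=.
have -> : (\sum_(t <= k < K) (b (iter k S y) + ~~ g (iter k S y)) =
    \sum_(0 <= k < K - t) (b (iter k S (iter t S y)) + ~~ g (iter k S (iter t S y))))%N.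
  by rewrite -{1}(add0n t) big_addn; apply: eq_bigr => k _; rewrite iterD.
have := IH (K - t)%N ltac:(lia) (iter t S y).
have : (\sum_(0 <= k < t) b (iter k S y) <=
    \sum_(0 <= k < t) (b (iter k S y) + ~~ g (iter k S y)))%N.
  by apply: leq_sum => k _; rewrite leq_addr.
by lia.
Qed.

Lemma cvge_lt {R : realType} {u : (\bar R)^nat} {a z : R} :
  u @ \oo --> a%:E -> a < z -> \forall n \near \oo, (u n < z%:E)%E.
Proof.
move=> /fine_cvgP[ufin ua] az.
by apply: filterS2 ufin (cvgr_lt _ ua _ az) => n /fineK <-; rewrite lte_fin.
Qed.

Lemma expr_ge_bernoulli {R : realType} (x : R) k : 1 <= x -> 1 + k%:R * (x - 1) <= x ^+ k.
Proof.
move=> x1; elim: k => [|k IH]; first by rewrite expr0 mul0r addr0.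
have : x * (1 + k%:R * (x - 1)) <= x * x ^+ k by rewrite ler_pM2l // (lt_le_trans ltr01).
have : 0 <= k%:R * ((x - 1) * (x - 1)) :> R by rewrite mulr_ge0 // -expr2 sqr_ge0.
by rewrite exprS -[k.+1]addn1 natrD; nra.
Qed.

Lemma expr_unbounded {R : realType} {x r : R} (rho : R) :
  1 < x -> 0 < r -> exists k, rho <= x ^+ k * r.
Proof.
move=> x1 r0; have x1_gt0 : 0 < x - 1 by rewrite subr_gt0.
have rho_ge0 : 0 <= `|rho| / (r * (x - 1)) by rewrite divr_ge0 // ltW // mulr_gt0.
have := archi_boundP rho_ge0; set k := Num.Def.archi_bound _.
rewrite ltr_pdivrMr ?mulr_gt0 // => rhok; exists k.
have : (1 + k%:R * (x - 1)) * r <= x ^+ k * r by rewrite ler_pM2r // expr_ge_bernoulli ?ltW.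
have := ler_norm rho; nra.
Qed.

Section iterates.
Context {R : realType} {d : measure_display} {Y : measurableType d} {S : Y -> Y}.

Lemma measurable_iter_preimage k {A : set Y} :
  measurable_fun setT S -> measurable A -> measurable (iter k S @^-1` A).
Proof.
move=> mS; elim: k A => [//|k IH] A mA; apply: (@IH (S @^-1` A)).
by rewrite -[S @^-1` A]setTI; exact: mS.
Qed.

Lemma measure_preserving_iter (m : {measure set Y -> \bar R}) k (A : set Y) :
  measure_preserving m S -> measurable A -> m (iter k S @^-1` A) = m A.
Proof.
move=> [mS mSA]; elim: k A => [//|k IH] A mA.
change (m (iter k S @^-1` (S @^-1` A)) = m A); rewrite IH ?mSA //.
by rewrite -[S @^-1` A]setTI; exact: mS.
Qed.

Lemma ergodic_subinvariant01 (m : {measure set Y -> \bar R}) (H : set Y) :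
  ergodic m S -> measurable H -> H `<=` S @^-1` H -> m H = 0%E \/ m H = 1%E.
Proof.
move=> [mpS erg] mH HS.
pose F k := iter k S @^-1` H.
have mF k : measurable (F k) := measurable_iter_preimage k mpS.1 mH.
have mU : measurable (\bigcup_k F k) by exact: bigcupT_measurable.
have ndF : nondecreasing_seq F.
  by apply/nondecreasing_seqP => k; apply/subsetPset => y /HS.
have UF : m (\bigcup_k F k) = m H.
  have := nondecreasing_cvg_mu (mu := m) mF mU ndF.
  have -> : m \o F = cst (m H) by apply/funext => k /=; exact: measure_preserving_iter.
  by move/cvg_lim => <-; rewrite ?lim_cst.
have SU : S @^-1` (\bigcup_k F k) = \bigcup_k F k.
  apply/seteqP; split => y /= [k _ Fky].
    by exists k.+1 => //; move: Fky; rewrite /F /= -iterSr.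
  by exists k => //; rewrite /F /= -iterSr; exact: (HS _ Fky).
by rewrite -UF; exact: erg.
Qed.

Lemma integral_visits (m : {measure set Y -> \bar R}) (A : set Y) K :
  measure_preserving m S -> measurable A ->
  (\int[m]_y (\sum_(0 <= k < K) \1_(iter k S @^-1` A) y)%:E = m A *+ K)%E.
Proof.
move=> mpS mA; have mAk k := measurable_iter_preimage k mpS.1 mA.
under eq_integral do rewrite -sumEFin.
rewrite ge0_integral_sum //; last by move=> k; apply/measurable_EFinP; exact: measurable_indic.
under eq_bigr => k _ do rewrite integral_indic // setIT measure_preserving_iter //.
by rewrite sumr_const_nat subn0.
Qed.

Lemma visit_count_integral_bound (m : {measure set Y -> \bar R}) (A C : set Y)
    (a c : R) (M : nat) :
  m setT = 1%E -> measure_preserving m S -> measurable A -> measurable C ->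
  m A = a%:E -> m C = c%:E ->
  (forall K y, (K <= 4 * \sum_(0 <= k < K) ((iter k S y \in A) + (iter k S y \in C))
                    + 4 * M)%N) ->
  forall K, K%:R <= 4 * (K%:R * (a + c)) + 4 * M%:R.
Proof.
move=> mT mpS mA mC ma mc count K.
pose v (B : set Y) y : R := \sum_(0 <= k < K) \1_(iter k S @^-1` B) y.
have v_ge0 B y : 0 <= v B y by apply: sumr_ge0 => k _; rewrite indicE.
have mv B : measurable B -> measurable_fun setT (fun y => (v B y)%:E).
  move=> mB; apply/measurable_EFinP; apply: measurable_sum => k.
  by apply: measurable_indic; exact: (measurable_iter_preimage k mpS.1 mB).
have int_cst (r : R) : (\int[m]_y r%:E = r%:E)%E by rewrite integral_cst // mT mule1.
have int_count : (\int[m]_y (4 * (v A y + v C y) + 4 * M%:R)%:E =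
    (4 * (K%:R * (a + c)) + 4 * M%:R)%:E)%E.
  under eq_integral do rewrite EFinD EFinM (EFinD (v A _)).
  rewrite ge0_integralD //; last 2 first.
  - by move=> y _; rewrite -EFinD -EFinM lee_fin mulr_ge0 ?addr_ge0.
  - by apply: emeasurable_funM => //; exact: emeasurable_funD (mv _ mA) (mv _ mC).
  rewrite ge0_integralZl //; try (by move=> y _; rewrite -EFinD lee_fin addr_ge0);
    try exact: emeasurable_funD (mv _ mA) (mv _ mC).
  rewrite ge0_integralD //; try (by move=> y _; rewrite lee_fin); try exact: mv.
  rewrite !integral_visits // ma mc int_cst.
  by rewrite -!EFin_natmul -EFinD -mulrnDl -[(a + c) *+ K]mulr_natl.
rewrite -lee_fin -int_count -int_cst.
apply: ge0_le_integral => //; last first.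
  move=> y _; rewrite lee_fin; have := count K y.
  rewrite -(ler_nat R) natrD !natrM natr_sum -big_split /= => /le_trans; apply.
  by rewrite lerD2r ler_pM2l // ler_sum // => k _; rewrite natrD !indicE.
apply/measurable_EFinP; apply: measurable_funD => //; apply: measurable_funM => //.
by apply: measurable_funD; apply/measurable_EFinP; exact: mv.
Qed.

Lemma stopping_time_visits {P : probability Y R} {A G : set Y} {M : nat} :
  measure_preserving P S -> measurable A -> measurable G ->
  (forall y, G y -> exists2 t, (0 < t <= M)%N &
      (t <= 4 * \sum_(0 <= k < t) (iter k S y \in A))%N) ->
  ((4^-1)%:E <= P A + P (~` G))%E.
Proof.
move=> mpS mA mG stop.
have [a PA] : exists a, P A = a%:E by exists (fine (P A)); rewrite fineK ?fin_num_measure.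
have [c PC] : exists c, P (~` G) = c%:E.
  by exists (fine (P (~` G))); rewrite fineK // fin_num_measure //; exact: measurableC.
rewrite PA PC -EFinD lee_fin leNgt; apply/negP => small.
have count K y : (K <= 4 * \sum_(0 <= k < K) ((iter k S y \in A) + (iter k S y \in ~` G))
    + 4 * M)%N.
  under eq_bigr do rewrite in_setC.
  exact: (@stopping_time_count _ S (mem A) (mem G) M (fun y Gy => stop y (set_mem Gy))).
have bound := @visit_count_integral_bound P _ _ _ _ _ (probability_setT P) mpS mA
  (measurableC mG) PA PC count.
pose de := 4^-1 - (a + c); have de_gt0 : 0 < de by rewrite subr_gt0.
have M_ge0 : 0 <= M%:R / de :> R by rewrite divr_ge0 // ltW.
have := archi_boundP M_ge0; set K := Num.Def.archi_bound _.
rewrite ltr_pdivrMr // => MK.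
have := bound K; rewrite /de in MK; lra.
Qed.

End iterates.

Lemma nonincreasing_measure_lt {R : realType} {d : measure_display} {Y : measurableType d}
    (P : probability Y R) (F : (set Y)^nat) (e : R) :
  (forall n, measurable (F n)) -> nonincreasing_seq F ->
  P (\bigcap_n F n) = 0%E -> 0 < e -> exists N, (P (F N) < e%:E)%E.
Proof.
move=> mF ndF PF0 e0.
have PF0_fin : (P (F 0%N) < +oo)%E by rewrite ltey_eq fin_num_measure.
have cvF : P \o F @ \oo --> 0%E.
  by rewrite -PF0; exact: nonincreasing_cvg_mu PF0_fin mF (bigcapT_measurable mF) ndF.
have [N _ PFe] := cvge_lt (a := 0) cvF e0.
by exists N; exact: (PFe N (leqnn N)).
Qed.

Section metric_borel.
Context {R : realType} {d : measure_display} {X : measurableType d}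
  {dist : X -> X -> R}.
Hypothesis dist_metric : is_metric dist.

Lemma dist_lt_bigcup (D : set X) (r : R) :
  (forall x (e : R), 0 < e -> exists2 y, D y & dist x y < e) ->
  [set z : X * X | dist z.1 z.2 < r] =
  \bigcup_(q in D) \bigcup_i
    ([set x | dist q x < i.+1%:R^-1] `*` [set y | dist q y < r - i.+1%:R^-1]).
Proof.
move=> dense; have [_ _ dsym dtri] := dist_metric.
apply/seteqP; split => [[x y] /= xy|[x y] [q _ [i _ [/= qx qy]]] /=]; last first.
  by have := dtri x q y; rewrite dsym in qx; move: qx qy; set e := _^-1; lra.
have e0 : 0 < (r - dist x y) / 2 by rewrite divr_gt0 // subr_gt0.
have [i _ /(_ i (leqnn i)) /= ie] := near_infty_natSinv_lt (PosNum e0).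
have [q Dq xq] : exists2 q, D q & dist x q < i.+1%:R^-1 by apply: dense; rewrite invr_gt0.
exists q => //; exists i => //; split => /=; first by rewrite dsym.
by have := dtri q x y; rewrite dsym in xq; move: xq ie; set e := _^-1; lra.
Qed.

Hypothesis dist_borel : borel_for dist.

Lemma measurable_ball q (r : R) : measurable [set y | dist q y < r].
Proof.
rewrite dist_borel; apply: sub_sigma_algebra => y /= qy.
exists (r - dist q y); first by rewrite subr_gt0.
by have [_ _ _ dtri] := dist_metric; move=> w /= yw; have := dtri q y w; lra.
Qed.

Lemma measurable_dist_lt (r : R) :
  metric_separable dist -> measurable [set z : X * X | dist z.1 z.2 < r].
Proof.
move=> [D [cD dense]]; rewrite (dist_lt_bigcup D r dense) bigcup_set_type.
apply: countable_bigcupT_measurable; first by rewrite (eq_countable (card_setT D)).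
by move=> q; apply: bigcupT_measurable => i; apply: measurableX; exact: measurable_ball.
Qed.

End metric_borel.

Section scaled_liminf_zero_infinity.
Context {R : realType} {d : measure_display} {Y : measurableType d}
  (P : probability Y R) (S : Y -> Y) (f : Y -> R) (s : nat -> R).
Hypothesis S_ergodic : ergodic P S.
Hypothesis f_ge0 : forall y, 0 <= f y.
Hypothesis measurable_f_lt : forall r, measurable [set y | f y < r].
Hypothesis s_gt0 : forall n, (0 < n)%N -> 0 < s n.
Variable N0 : nat.
Hypothesis s_nondecr : forall n, (N0 <= n)%N -> s n <= s n.+1.

Let mS : measurable_fun setT S := S_ergodic.1.1.

Definition scaled n y := s n * f (iter n S y).
Definition scaled_liminf y : \bar R := limn_einf (fun n => (scaled n y)%:E).

Definition hits_after N r := \bigcup_(n in [set n | (N < n)%N]) [set y | scaled n y < r].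
Definition hits_io r := \bigcap_N hits_after N r.
Definition hits_between N M r :=
  \bigcup_(n in [set n | (N < n <= M)%N]) [set y | scaled n y < r].

Lemma scaled_iter m k y : scaled m (iter k S y) = s m * f (iter (m + k) S y).
Proof. by rewrite /scaled iterD. Qed.

Lemma s_le m n : (N0 <= m)%N -> (m <= n)%N -> s m <= s n.
Proof.
move=> N0m /subnK <-; elim: (n - m)%N => [//|k IH]; rewrite addSn.
by apply: (le_trans IH); apply: s_nondecr; lia.
Qed.

Lemma measurable_scaled_lt n r : (0 < n)%N -> measurable [set y | scaled n y < r].
Proof.
move=> n0; have -> : [set y | scaled n y < r] = iter n S @^-1` [set y | f y < r / s n].
  by apply/seteqP; split => y /=; rewrite /scaled ltr_pdivlMr ?s_gt0 // mulrC.
exact (measurable_iter_preimage n mS (measurable_f_lt _)).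
Qed.

Lemma measurable_hits_after N r : measurable (hits_after N r).
Proof. by apply: bigcup_measurable => n /= Nn; apply: measurable_scaled_lt; lia. Qed.

Lemma measurable_hits_io r : measurable (hits_io r).
Proof. exact: bigcapT_measurable (measurable_hits_after ^~ r). Qed.

Lemma measurable_hits_between N M r : measurable (hits_between N M r).
Proof. by apply: bigcup_measurable => n /= /andP[Nn _]; apply: measurable_scaled_lt; lia. Qed.

Lemma hits_io_subinvariant r : hits_io r `<=` S @^-1` hits_io r.
Proof.
move=> y yr N _; have [n /= Nn yn] := yr (N + N0).+1 I.
exists n.-1; first by rewrite /=; lia.
rewrite /= -[S y]/(iter 1 S y) scaled_iter addn1 prednK; last by lia.
apply: le_lt_trans yn; rewrite ler_wpM2r // s_le //; lia.
Qed.

Lemma hits_io01 r : P (hits_io r) = 0%E \/ P (hits_io r) = 1%E.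
Proof. exact: ergodic_subinvariant01 S_ergodic (measurable_hits_io r) (hits_io_subinvariant r). Qed.

Lemma hits_after_lt {r} : P (hits_io r) = 0%E -> exists N, (P (hits_after N r) < (8^-1)%:E)%E.
Proof.
move=> H0; apply: nonincreasing_measure_lt => //; first by move=> N; exact: measurable_hits_after.
apply/nonincreasing_seqP => N; apply/subsetPset => y [n /= Nn yn].
by exists n => //=; lia.
Qed.

Lemma hits_between_compl_lt {r} N : P (hits_io r) = 1%E ->
  exists M, (P (~` hits_between N M r) < (8^-1)%:E)%E.
Proof.
move=> H1; apply: nonincreasing_measure_lt => //.
- by move=> M; apply: measurableC; exact: measurable_hits_between.
- apply/nonincreasing_seqP => M; apply/subsetPset; apply: subsetC => y [n /= Nn yn].
  by exists n => //=; lia.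
rewrite -setC_bigcup.
have -> : \bigcup_M hits_between N M r = hits_after N r.
  apply/seteqP; split => y; first by move=> [M _ [n /= /andP[Nn _] yn]]; exists n.
  by move=> [n /= Nn yn]; exists n => //; exists n => //=; rewrite Nn leqnn.
have mA := measurable_hits_after N r.
rewrite probability_setC //.
have -> : P (hits_after N r) = 1%E.
  apply/eqP; rewrite eq_le probability_le1 //=.
  apply: (@le_trans _ _ (P (hits_io r))); first by rewrite H1.
  by apply: le_measure; rewrite ?inE //; [exact: measurable_hits_io | move=> y /(_ N I)].
by rewrite subee.
Qed.

Lemma scaled_liminf_ge0 y : (0 <= scaled_liminf y)%E.
Proof.
apply: (@limn_einf_ge _ _ _ 1) => n n1; rewrite lee_fin mulr_ge0 //.
exact/ltW/s_gt0.
Qed.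

Lemma scaled_liminf_le r y : hits_io r y -> (scaled_liminf y <= r%:E)%E.
Proof.
move=> yr; apply: limn_einf_le => N; have [n /= Nn yn] := yr N I.
by exists n; [exact: ltnW | rewrite lte_fin].
Qed.

Lemma hits_io_gt r y : (scaled_liminf y < r%:E)%E -> hits_io r y.
Proof.
move=> yr N _; have [n Nn yn] := limn_einf_lt yr N.+1.
by exists n; rewrite /= -?lte_fin.
Qed.

Lemma scaled_liminf_ae0 : (forall i, P (hits_io i.+1%:R^-1) = 1%E) ->
  {ae P, forall y, scaled_liminf y = 0%E}.
Proof.
move=> all1.
have : P.-negligible (\bigcup_i ~` hits_io i.+1%:R^-1).
  apply: negligible_bigcup => i; exists (~` hits_io i.+1%:R^-1).
  have mH := measurable_hits_io i.+1%:R^-1.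
  have PC0 := probability_setC P mH; rewrite all1 subee // in PC0.
  by split; [exact: measurableC | exact PC0 | ].
apply: negligibleS => y /= yn0; apply: contrapT => yr; apply: yn0.
apply/eqP; rewrite eq_le scaled_liminf_ge0 andbT; apply/lee_addgt0Pr => e e0.
have [i _ /(_ i (leqnn i)) /= ie] := near_infty_natSinv_lt (PosNum e0).
rewrite add0e; apply: (le_trans (scaled_liminf_le i.+1%:R^-1 y _)).
  by apply: contrapT => ni; apply: yr; exists i.
by rewrite lee_fin ltW.
Qed.

Variable lam : R.
Hypothesis lam_gt1 : 1 < lam.
Variable N2 : nat.
Hypothesis s_doubling : forall m, (N2 <= m)%N -> lam * s m <= s (2 * m).

(* For m = n - k with N < m <= n/2 we get lam s_m <= s_(2m) <= s_n. *)
Lemma hits_after_window y n N k r : (N0 + N2 <= N)%N -> scaled n y < lam * r ->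
  (n - n./2 <= k < n - N)%N -> hits_after N r (iter k S y).
Proof.
move=> NN2 yn /andP[k1 k2]; exists (n - k)%N; first by rewrite /=; lia.
rewrite /= scaled_iter subnK; last by lia.
have n2 := odd_double_half n; rewrite -mul2n in n2.
have s_jump : lam * s (n - k) <= s n.
  apply: (le_trans (s_doubling (n - k) _)); first by lia.
  by apply: s_le; lia.
rewrite -(ltr_pM2l (lt_trans ltr01 lam_gt1)) mulrA; apply: le_lt_trans yn.
exact: ler_wpM2r.
Qed.

Lemma hits_window_count y n N r : (N0 + N2 <= N)%N -> (4 * N + 3 <= n)%N ->
  scaled n y < lam * r ->
  (n.+1 <= 4 * \sum_(0 <= k < n.+1) (iter k S y \in hits_after N r))%N.
Proof.
move=> NN2 Nn yn; have n2 := odd_double_half n; rewrite -mul2n in n2.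
have k1 : (0 <= n - n./2)%N by [].
have k2 : (n - n./2 <= n - N)%N by lia.
have k3 : (n - N <= n.+1)%N by lia.
rewrite (big_cat_nat k1 (leq_trans k2 k3)) /= (big_cat_nat k2 k3) /=.
rewrite [X in (_ <= 4 * (_ + (X + _)))%N](_ : _ = \sum_(n - n./2 <= k < n - N) 1)%N.
  by rewrite sum_nat_const_nat; lia.
apply: eq_big_nat => k kn; apply/eqP; rewrite eqb1 inE.
exact: hits_after_window yn kn.
Qed.

Lemma hits_io_scale r : P (hits_io r) = 0%E -> P (hits_io (lam * r)) = 0%E.
Proof.
move=> Pr0; have [//|Plr1] := hits_io01 (lam * r).
have [N PN] := hits_after_lt Pr0.
pose N' := (N + N0 + N2)%N.
have [M PM] := hits_between_compl_lt (4 * N' + 3) Plr1.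
have stop y : hits_between (4 * N' + 3) M (lam * r) y ->
    exists2 t, (0 < t <= M.+1)%N &
      (t <= 4 * \sum_(0 <= k < t) (iter k S y \in hits_after N' r))%N.
  move=> [n /= /andP[n1 n2] yn]; exists n.+1; first by lia.
  by apply: hits_window_count yn; lia.
have := stopping_time_visits S_ergodic.1 (measurable_hits_after N' r)
  (measurable_hits_between _ _ _) stop.
apply: contraTeq => _; rewrite -ltNge.
have PN' : (P (hits_after N' r) <= P (hits_after N r))%E.
  apply: le_measure; rewrite ?inE; try exact: measurable_hits_after.
  by move=> y [n /= Nn yn]; exists n => //=; lia.
apply: (lt_le_trans (lteD (le_lt_trans PN' PN) PM)).
by rewrite -EFinD lee_fin; lra.
Qed.

Lemma scaled_liminf_aeoo r : 0 < r -> P (hits_io r) = 0%E ->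
  {ae P, forall y, scaled_liminf y = +oo%E}.
Proof.
move=> r0 Pr0.
have : P.-negligible (\bigcup_k hits_io (lam ^+ k * r)).
  apply: negligible_bigcup => k; exists (hits_io (lam ^+ k * r)).
  have Pk0 : P (hits_io (lam ^+ k * r)) = 0%E.
    by elim: k => [|k IH]; rewrite ?expr0 ?mul1r // exprS -mulrA hits_io_scale.
  by split; [exact: measurable_hits_io | exact Pk0 | ].
apply: negligibleS => y /= yfin.
have [rho yrho] : exists rho : R, (scaled_liminf y < rho%:E)%E.
  move: yfin (scaled_liminf_ge0 y); case: (scaled_liminf y) => [x| |] //= _ _.
  by exists (x + 1); rewrite lte_fin ltrDl.
have [k rhok] := expr_unbounded rho lam_gt1 r0.
by exists k => //; apply: hits_io_gt; rewrite (lt_le_trans yrho) // lee_fin.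
Qed.

Theorem scaled_liminf_ae_0_or_oo :
  {ae P, forall y, scaled_liminf y = 0%E} \/ {ae P, forall y, scaled_liminf y = +oo%E}.
Proof.
have [all1|/existsNP[i Pi]] := pselect (forall i, P (hits_io i.+1%:R^-1) = 1%E).
  by left; exact: scaled_liminf_ae0.
right; apply: (@scaled_liminf_aeoo i.+1%:R^-1); first by rewrite invr_gt0.
by case: (hits_io01 i.+1%:R^-1) Pi.
Qed.

End scaled_liminf_zero_infinity.

Arguments scaled_liminf_ae_0_or_oo {R d Y P S f s} S_ergodic f_ge0 measurable_f_lt s_gt0
  {N0} s_nondecr {lam} lam_gt1 {N2} s_doubling.

Lemma iter_pair {X : Type} (T : X -> X) n (z : X * X) :
  iter n (fun z => (T z.1, T z.2)) z = (iter n T z.1, iter n T z.2).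
Proof. by elim: n => [|n /= ->]; [case: z|]. Qed.

Theorem corollary3p10 (R : realType) (d : measure_display) (X : measurableType d)
  (dist : X -> X -> R) (T : X -> X) (mu : probability X R) (s : nat -> R) :
  is_metric dist -> metric_separable dist -> borel_for dist ->
  measurable_fun setT T -> measure_preserving mu T ->
  weakly_mixing mu T ->
  scale_sequence s -> two_jumpy s ->
  {ae (mu \x mu)%E, forall z : X * X, prox_gauge dist T s z.1 z.2 = 0%E} \/
  {ae (mu \x mu)%E, forall z : X * X, prox_gauge dist T s z.1 z.2 = +oo%E}.
Proof.
move=> dist_metric separable borel _ _ wmix [s_gt0 _] jumpy.
have [[N0 s_nondecr] _] := jumpy.
have [lam lam_gt1 [N2 s_doubling]] := two_jumpy_doubling s_gt0 jumpy.
have dist_ge0 (z : X * X) : 0 <= dist z.1 z.2 by case: dist_metric.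
have dist_lt r := measurable_dist_lt dist_metric borel r separable.
have gaugeE z : scaled_liminf (fun z => (T z.1, T z.2)) (fun z => dist z.1 z.2) s z =
    prox_gauge dist T s z.1 z.2.
  by congr limn_einf; apply/funext => n; rewrite /scaled iter_pair.
have [ae0|aeoo] := scaled_liminf_ae_0_or_oo wmix dist_ge0 dist_lt s_gt0 s_nondecr
  lam_gt1 s_doubling.
  by left; apply: filterS ae0 => z; rewrite gaugeE.
by right; apply: filterS aeoo => z; rewrite gaugeE.
Qed.
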